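(* Every abelian group possessing a subgroup of finite index which is of profinite type is itself of profinite type.
   Context: An abstract group is of profinite type if it admits a topology making it a profinite group (compact, Hausdorff, totally disconnected topological group). *)

From mathcomp Require Import all_boot all_algebra.
Set Implicit Arguments. Unset Strict Implicit. Unset Printing Implicit Defensive.
Import GRing.Theory.
Local Open Scope ring_scope.

Fixpoint inl (I : Type) (i : I) (s : list I) : Prop :=
  if s is j :: s' then j = i \/ inl i s' else False.

Section Topology.
Variable G : Type.

Definition is_topology (O : (G -> Prop) -> Prop) : Prop :=
  O (fun _ => True) /\
  (forall (I : Type) (U : I -> G -> Prop), (forall i, O (U i)) ->
     O (fun x => exists i, U i x)) /\
  (forall U V, O U -> O V -> O (fun x => U x /\ V x)).

(* Product topology on G * G (open sets = unions of open boxes). *)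
Definition prod_open (O : (G -> Prop) -> Prop) (W : G * G -> Prop) : Prop :=
  forall p, W p -> exists U V, [/\ O U, O V, U p.1, V p.2 &
                    forall q, U q.1 -> V q.2 -> W q].

Definition compact_top (O : (G -> Prop) -> Prop) : Prop :=
  forall (I : Type) (U : I -> G -> Prop), (forall i, O (U i)) ->
    (forall x, exists i, U i x) ->
    exists s : list I, forall x, exists i, inl i s /\ U i x.

Definition hausdorff_top (O : (G -> Prop) -> Prop) : Prop :=
  forall x y, x <> y -> exists U V, [/\ O U, O V, U x, V y &
                                  forall z, U z -> V z -> False].

Definition connected_subset (O : (G -> Prop) -> Prop) (S : G -> Prop) : Prop :=
  ~ exists U V, O U /\ O V /\ (forall x, S x -> U x \/ V x) /\
                 (exists x, S x /\ U x) /\ (exists x, S x /\ V x) /\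
                 (forall x, S x -> U x -> V x -> False).

Definition totally_disconnected_top (O : (G -> Prop) -> Prop) : Prop :=
  forall S, connected_subset O S -> forall x y, S x -> S y -> x = y.

Definition profinite_topology (add : G -> G -> G) (opp : G -> G)
    (O : (G -> Prop) -> Prop) : Prop :=
  is_topology O /\
  (forall W, O W -> prod_open O (fun p => W (add p.1 p.2))) /\
  (forall W, O W -> O (fun x => W (opp x))) /\
  compact_top O /\ hausdorff_top O /\ totally_disconnected_top O.

Definition of_profinite_type (add : G -> G -> G) (opp : G -> G) : Prop :=
  exists O, profinite_topology add opp O.
End Topology.

Definition is_subgroup (A : zmodType) (B : {pred A}) : Prop :=
  (0 \in B) /\ (forall x y, x \in B -> y \in B -> x - y \in B).

Lemma subgroup_opp (A : zmodType) (B : {pred A}) (hB : is_subgroup B) x :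
  x \in B -> - x \in B.
Proof. by case: hB => h0 hs hx; rewrite -sub0r hs. Qed.

Lemma subgroup_add (A : zmodType) (B : {pred A}) (hB : is_subgroup B) x y :
  x \in B -> y \in B -> x + y \in B.
Proof.
by case: (hB) => h0 hs hx hy; rewrite -[y]opprK hs // subgroup_opp.
Qed.

Definition sub_add (A : zmodType) (B : {pred A}) (hB : is_subgroup B)
  (x y : {a : A | a \in B}) : {a : A | a \in B} :=
  exist _ (sval x + sval y) (subgroup_add hB (svalP x) (svalP y)).

Definition sub_opp (A : zmodType) (B : {pred A}) (hB : is_subgroup B)
  (x : {a : A | a \in B}) : {a : A | a \in B} :=
  exist _ (- sval x) (subgroup_opp hB (svalP x)).

Definition finite_index (A : zmodType) (B : {pred A}) : Prop :=
  exists s : seq A, forall a, exists2 c, c \in s & a - c \in B.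

From mathcomp Require Import all_boot all_algebra.
From Stdlib Require Import FunctionalExtensionality PropExtensionality.
Set Implicit Arguments. Unset Strict Implicit.
Import GRing.Theory.
Local Open Scope ring_scope.

(* Let B carry a profinite group topology O. Declare W open in A when, for
   every a, the trace of W - a on B is O-open. Each coset c + B is then open
   and homeomorphic to B by translation, so A is a topological group; it is a
   finite disjoint union of compact cosets, hence compact; and since the
   cosets are clopen, separating two points or splitting a connected set
   reduces to the same question inside one coset, i.e. inside B. *)

Section OpenSets.
Variables (G : Type) (O : (G -> Prop) -> Prop).

Lemma open_ext (U V : G -> Prop) : (forall x, U x <-> V x) -> O U -> O V.
Proof.
move=> UV; suff -> : V = U by [].
apply: functional_extensionality => x; apply: propositional_extensionality.
by split; apply UV.
Qed.

Hypothesis topO : is_topology O.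

Lemma open_local (S : G -> Prop) :
  (forall p, S p -> exists V, [/\ O V, V p & forall q, V q -> S q]) -> O S.
Proof.
case: topO => _ [bigU _] locS.
pose I := {V : G -> Prop | O V /\ forall q, V q -> S q}.
apply: open_ext (bigU I (@sval _ _) (fun i => proj1 (svalP i))) => x; split.
- by case=> [[V [_ VS]]] /= /VS.
- by move=> /locS [V [oV Vx VS]]; exists (exist _ V (conj oV VS)).
Qed.

Lemma open0 : O (fun _ => False).
Proof.
case: topO => _ [bigU _].
apply: open_ext (bigU False (fun i => match i with end) (fun i => match i with end)).
by move=> x; split=> // [[]].
Qed.

Lemma openT : O (fun _ => True).
Proof. by case: topO. Qed.

End OpenSets.

Lemma inl_catl (I : Type) (i : I) (l1 l2 : list I) : inl i l1 -> inl i (l1 ++ l2).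
Proof. by elim: l1 => //= j l IH [->|/IH]; [left|right]. Qed.

Lemma inl_catr (I : Type) (i : I) (l1 l2 : list I) : inl i l2 -> inl i (l1 ++ l2).
Proof. by elim: l1 => //= j l IH /IH; right. Qed.

Section CosetTopology.
Variables (A : zmodType) (B : {pred A}) (hB : is_subgroup B).
Local Notation SB := {a : A | a \in B}.

Definition sub0 : SB := exist _ 0 (proj1 hB).

Lemma memB_shift a w (b : SB) : (a + sval b - w \in B) = (a - w \in B).
Proof.
apply/idP/idP => h; last by rewrite addrAC subgroup_add // (svalP b).
have -> : a - w = a + sval b - w - sval b by rewrite addrAC addrK.
exact: (proj2 hB) h (svalP b).
Qed.

Variable O : (SB -> Prop) -> Prop.
Hypothesis topO : is_topology O.
Hypothesis addO : forall W, O W -> prod_open O (fun p => W (sub_add hB p.1 p.2)).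

Definition coset_open (W : A -> Prop) : Prop :=
  forall a, O (fun b : SB => W (a + sval b)).

Definition coset_image (c : A) (V : SB -> Prop) : A -> Prop :=
  fun z => exists2 v, V v & z = c + sval v.

Lemma coset_image_mem c V v : V v -> coset_image c V (c + sval v).
Proof. by exists v. Qed.

Lemma coset_image0 c V : V sub0 -> coset_image c V c.
Proof. by exists sub0 => //=; rewrite addr0. Qed.

Lemma coset_imageI c V1 V2 z : coset_image c V1 z -> coset_image c V2 z ->
  exists2 v, V1 v /\ V2 v & z = c + sval v.
Proof.
case=> u Vu ->; case=> v Vv /addrI /val_inj uv.
by exists u => //; split=> //; rewrite uv.
Qed.

Lemma open_translate (b0 : SB) W : O W -> O (fun b => W (sub_add hB b0 b)).
Proof.
move=> oW; apply: open_local => // b Wb.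
have [U [V [oU oV Ub0 Vb UVW]]] := @addO _ oW (b0, b) Wb.
by exists V; split=> // q Vq; exact: (UVW (b0, q)).
Qed.

Lemma coset_image_open c V : O V -> coset_open (coset_image c V).
Proof.
move=> oV a; have [acB | acNB] := boolP (a - c \in B).
  pose d : SB := exist _ (a - c) acB.
  apply: open_ext (open_translate d oV) => b; split=> [Vdb | [v Vv e]].
    by exists (sub_add hB d b) => //=; rewrite addrA [c + _]addrC subrK.
  suff -> : sub_add hB d b = v by [].
  by apply: val_inj; rewrite /= addrAC e [c + _]addrC addrK.
apply: open_ext (open0 topO) => b; split=> // -[v _ e]; case/negP: acNB.
rewrite -[a](addrK (sval b)) e addrAC [c + _]addrC addrK.
exact: (proj2 hB) _ _ (svalP v) (svalP b).
Qed.

Lemma coset_open_topology : is_topology coset_open.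
Proof.
case: topO => _ [bigU capO]; split; first by move=> a; apply: openT.
split=> [I U oU a | U V oU oV a]; last exact: capO.
exact: (bigU I (fun i b => U i (a + sval b)) (fun i => oU i a)).
Qed.

Lemma coset_open_add W :
  coset_open W -> prod_open coset_open (fun p => W (p.1 + p.2)).
Proof.
move=> oW [p1 p2] /= Wp.
have W00 : W (p1 + p2 + sval (sub_add hB sub0 sub0)) by rewrite /= !addr0.
have [U [V [oU oV U0 V0 UVW]]] := @addO _ (oW (p1 + p2)) (sub0, sub0) W00.
exists (coset_image p1 U), (coset_image p2 V).
split; do ?[exact: coset_image_open | exact: coset_image0].
move=> [q1 q2] /= [u Uu ->] [v Vv ->].
by rewrite addrACA; exact: (UVW (u, v)).
Qed.

Lemma coset_open_opp : (forall V, O V -> O (fun b => V (sub_opp hB b))) ->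
  forall W, coset_open W -> coset_open (fun x => W (- x)).
Proof.
move=> oppO W oW a; apply: open_ext (oppO _ (oW (- a))) => b /=.
by rewrite opprD.
Qed.

Lemma coset_open_compact : finite_index B -> compact_top O ->
  compact_top coset_open.
Proof.
move=> [s cover] cO I U oU covU.
have [l coverl] : exists l : list I, forall c, c \in s ->
    forall b : SB, exists i, inl i l /\ U i (c + sval b).
  elim: s {cover} => [|c s [l2 IH]]; first by exists nil.
  have [l1 IHc] := cO I (fun i b => U i (c + sval b)) (fun i => oU i c)
    (fun b => covU (c + sval b)).
  exists (l1 ++ l2) => c'; rewrite in_cons => /orP[/eqP -> | c's] b.
    by have [i [li Ui]] := IHc b; exists i; split=> //; apply: inl_catl.
  by have [i [li Ui]] := IH c' c's b; exists i; split=> //; apply: inl_catr.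
exists l => x; have [c cs xc] := cover x.
have [i [li]] := coverl c cs (exist _ (x - c) xc).
by rewrite /= addrC subrK; exists i.
Qed.

Lemma coset_open_hausdorff : hausdorff_top O -> hausdorff_top coset_open.
Proof.
move=> hausO x y xy; have [yxB | yxNB] := boolP (y - x \in B).
  pose d : SB := exist _ (y - x) yxB.
  have d_neq0 : sub0 <> d.
    by move=> /(f_equal sval) /esym /eqP; rewrite /= subr_eq0 => /eqP /esym.
  have [U [V [oU oV U0 Vd UV]]] := hausO _ _ d_neq0.
  exists (coset_image x U), (coset_image x V).
  split; do ?[exact: coset_image_open | exact: coset_image0].
    by exists d => //=; rewrite addrC subrK.
  by move=> z Uz Vz; have [v [Uv Vv] _] := coset_imageI Uz Vz; exact: UV Uv Vv.
exists (coset_image x (fun _ => True)), (coset_image y (fun _ => True)).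
split; do ?[exact: coset_image_open (openT topO) | exact: coset_image0].
move=> z [u _ ->] [v _ e]; case/negP: yxNB.
rewrite -[y](addrK (sval v)) -e addrAC [x + _]addrC addrK.
exact: (proj2 hB) _ _ (svalP u) (svalP v).
Qed.

(* For q = true this is the coset w + B, for q = false its complement. *)
Lemma coset_open_coset w (q : bool) : coset_open (fun t => (t - w \in B) = q).
Proof.
move=> a; have [<- | neq] := eqVneq (a - w \in B) q.
  by apply: open_ext (openT topO) => b; rewrite memB_shift.
apply: open_ext (open0 topO) => b; rewrite memB_shift.
by split=> // eq_q; rewrite eq_q eqxx in neq.
Qed.

Lemma connected_sub_coset S : connected_subset coset_open S ->
  forall z w, S z -> S w -> z - w \in B.
Proof.
move=> conS z w Sz Sw; apply/negPn/negP => zwNB; apply: conS.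
exists (fun t => (t - w \in B) = true), (fun t => (t - w \in B) = false).
split; first exact: coset_open_coset.
split; first exact: coset_open_coset.
split; first by move=> t _; case: (t - w \in B); [left|right].
split; first by exists w; rewrite subrr (proj1 hB).
by split=> [|t _ ->]; [exists z; split=> //; apply/negbTE|].
Qed.

Lemma connected_coset_shift S x : connected_subset coset_open S -> S x ->
  connected_subset O (fun b => S (x + sval b)).
Proof.
move=> conS Sx [U [V [oU [oV [cov [[b1 [Sb1 Ub1]] [[b2 [Sb2 Vb2]] UV]]]]]]].
apply: (conS); exists (coset_image x U), (coset_image x V).
split; first exact: coset_image_open.
split; first exact: coset_image_open.
split.
  move=> t St; pose b : SB := exist _ (t - x) (connected_sub_coset conS St Sx).
  have tb : t = x + sval b by rewrite /= addrC subrK.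
  have Sxb : S (x + sval b) by rewrite -tb.
  by rewrite tb; case: (cov b Sxb) => ?; [left|right]; exists b.
split; first by exists (x + sval b1); split=> //; apply: coset_image_mem.
split; first by exists (x + sval b2); split=> //; apply: coset_image_mem.
by move=> t St Ut Vt; have [v [Uv Vv] tv] := coset_imageI Ut Vt;
  apply: (UV v) => //; rewrite -tv.
Qed.

Lemma coset_open_totally_disconnected :
  totally_disconnected_top O -> totally_disconnected_top coset_open.
Proof.
move=> tdO S conS x y Sx Sy.
have yxB := connected_sub_coset conS Sy Sx.
have := tdO _ (connected_coset_shift conS Sx) sub0 (exist _ (y - x) yxB).
rewrite /= addr0 addrC subrK => /(_ Sx Sy) /(f_equal sval) /= /eqP.
by rewrite eq_sym subr_eq0 => /eqP.
Qed.

End CosetTopology.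

Theorem mainTheorem8 (A : zmodType) (B : {pred A}) (hB : is_subgroup B) :
  finite_index B ->
  of_profinite_type (sub_add hB) (sub_opp hB) ->
  of_profinite_type (fun x y : A => (x + y)%R) (fun x : A => (- x)%R).
Proof.
move=> finB [O [topO [addO [oppO [cO [hausO tdO]]]]]].
exists (coset_open O); split; first exact: coset_open_topology topO.
split; first exact: coset_open_add topO addO.
split; first exact: coset_open_opp oppO.
split; first exact: coset_open_compact finB cO.
split; first exact: coset_open_hausdorff topO addO hausO.
exact: coset_open_totally_disconnected topO addO tdO.
Qed.
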